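(* Let $G$ and $H$ be two graphs on the same vertex set $V$ such that $d(G,H)\le e$, and assume $\lambda_1(H)>\lambda_2(H)$. Let $\mathbf{x}$ and $\mathbf{y}$ be unit (in $\ell_2$) nonnegative Perron–Frobenius eigenvectors of the adjacency matrices of $G$ and $H$, respectively. Then $$\sum_{v\in V}(x_v-y_v)^2\le\frac{8\sqrt{e}}{\lambda_1(H)-\lambda_2(H)}\qquad\text{and}\qquad \sum_{v\in V}|x_v^2-y_v^2|\le\frac{8e^{1/4}}{\sqrt{\lambda_1(H)-\lambda_2(H)}}.$$
   Context: $d(G,H)$ is the edit distance: the minimum number of edges one must add or delete to transform $G$ into $H$. $\lambda_1(H)\ge\lambda_2(H)\ge\cdots$ are the eigenvalues of the adjacency matrix of $H$. A Perron–Frobenius eigenvector is a nonnegative eigenvector for the largest adjacency eigenvalue. *)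

From HB Require Import structures.
From mathcomp Require Import all_boot all_order all_algebra.
Set Implicit Arguments. Unset Strict Implicit. Unset Printing Implicit Defensive.
Import Order.TTheory GRing.Theory Num.Theory.
Local Open Scope ring_scope.

Definition simple_graph n (G : rel 'I_n) : Prop := symmetric G /\ irreflexive G.

Definition adjmx (R : rcfType) n (G : rel 'I_n) : 'M[R]_n :=
  \matrix_(i, j) (G i j)%:R.

Definition edit_dist n (G H : rel 'I_n) : nat :=
  #|[set p : 'I_n * 'I_n | (p.1 < p.2)%N && (G p.1 p.2 != H p.1 p.2)]|.

(* s is the list of eigenvalues of A, with multiplicity, in nonincreasing order:
   s`_0 = lambda_1 >= s`_1 = lambda_2 >= ... *)
Definition spectrum (R : rcfType) n (A : 'M[R]_n) (s : seq R) : Prop :=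
  sorted (fun a b => b <= a) s /\ char_poly A = \prod_(a <- s) ('X - a%:P).

Definition PF_eigvec (R : rcfType) n (A : 'M[R]_n) (x : 'rV[R]_n) : Prop :=
  (forall i, 0 <= x 0 i) /\ x != 0 /\
  exists lam : R, x *m A = lam *: x /\ (forall mu, eigenvalue A mu -> mu <= lam).

Definition unit_vec (R : rcfType) n (x : 'rV[R]_n) : Prop :=
  \sum_i x 0 i ^+ 2 = 1.

(* Let A, B be the adjacency matrices of G, H, let g = lambda_1(H) - lambda_2(H)
   and alpha = <x, y>.  An edit changes the quadratic form of a unit vector only
   slightly: by Cauchy-Schwarz, |u^T (A - B) u| <= sqrt (2 d(G,H)) <= 2 sqrt e.
   Comparing Rayleigh quotients, x^T B x >= lambda_1(A) - 2 sqrt e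
   >= y^T A y - 2 sqrt e >= lambda_1(B) - 4 sqrt e, whereas writing
   x = alpha y + z with z orthogonal to y gives
   x^T B x <= alpha^2 lambda_1(B) + (1 - alpha^2) lambda_2(B), because
   lambda_1(B) is simple.  Hence (1 - alpha^2) g <= 4 sqrt e.  As alpha >= 0,
   sum (x_v - y_v)^2 = 2 - 2 alpha <= 2 (1 - alpha^2), and by Cauchy-Schwarz
   (sum |x_v^2 - y_v^2|)^2 <= 4 sum (x_v - y_v)^2.
   The Rayleigh bounds for the real symmetric A and B come from the spectral
   theorem for normal matrices, applied to their complexifications. *)

From HB Require Import structures.
From mathcomp Require Import all_boot all_order all_algebra.
From mathcomp Require Import complex ring lra.
Import Order.TTheory GRing.Theory Num.Theory.
Local Open Scope ring_scope.
Set Implicit Arguments. Unset Strict Implicit. Unset Printing Implicit Defensive.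

Lemma char_poly_conj (F : fieldType) n (Q D P : 'M[F]_n) :
  Q *m P = 1%:M -> char_poly (Q *m D *m P) = char_poly D.
Proof.
move=> QP; pose Qp := map_mx polyC Q; pose Pp := map_mx polyC P.
have QPp : Qp *m Pp = 1%:M by rewrite -map_mxM QP map_mx1.
rewrite /char_poly; have -> : char_poly_mx (Q *m D *m P) = Qp *m char_poly_mx D *m Pp.
  rewrite /char_poly_mx !map_mxM mulmxBr mulmxBl -/Qp -/Pp.
  by congr (_ - _); rewrite -mulmxA -scalar_mxC mulmxA QPp mul1mx.
by rewrite !det_mulmx mulrAC -det_mulmx QPp det1 mul1r.
Qed.

Lemma char_poly_diag (F : fieldType) n (d : 'rV[F]_n) :
  char_poly (diag_mx d) = \prod_(k < n) ('X - (d 0 k)%:P).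
Proof.
rewrite char_poly_trig ?diag_mx_is_trig //.
by apply: eq_bigr => k _; rewrite mxE eqxx mulr1n.
Qed.

Lemma count_enum (T : finType) (a : pred T) : count a (enum T) = #|a|.
Proof. by rewrite -sum1_count big_enum_cond -sum1_card. Qed.

Lemma sqr_sum_mul_le (R : realDomainType) (I : finType) (a b : I -> R) :
  (\sum_i a i * b i) ^+ 2 <= (\sum_i a i ^+ 2) * (\sum_i b i ^+ 2).
Proof.
have lagrange : \sum_i \sum_j (a i * b j - a j * b i) ^+ 2 =
    2 * ((\sum_i a i ^+ 2) * (\sum_i b i ^+ 2) - (\sum_i a i * b i) ^+ 2).
  transitivity (\sum_i \sum_j
      (a i ^+ 2 * b j ^+ 2 + a j ^+ 2 * b i ^+ 2 -
       (a i * b i * (a j * b j) + a i * b i * (a j * b j)))).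
    by apply: eq_bigr => i _; apply: eq_bigr => j _; ring.
  have AB : \sum_i \sum_j a i ^+ 2 * b j ^+ 2 = (\sum_i a i ^+ 2) * (\sum_i b i ^+ 2).
    by rewrite big_distrlr.
  have BA : \sum_i \sum_j a j ^+ 2 * b i ^+ 2 = (\sum_i a i ^+ 2) * (\sum_i b i ^+ 2).
    by rewrite exchange_big big_distrlr.
  have SS : \sum_i \sum_j a i * b i * (a j * b j) = (\sum_i a i * b i) ^+ 2.
    by rewrite expr2 big_distrlr.
  under eq_bigr do rewrite sumrB !big_split /=.
  by rewrite sumrB !big_split /= AB BA SS; ring.
have : 0 <= \sum_i \sum_j (a i * b j - a j * b i) ^+ 2.
  by apply: sumr_ge0 => i _; apply: sumr_ge0 => j _; exact: sqr_ge0.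
by rewrite lagrange pmulr_rge0 // subr_ge0.
Qed.

Lemma head_ge_sorted (R : numDomainType) (t : seq R) :
  sorted (fun a b => b <= a) t -> {in t, forall a, a <= t`_0}.
Proof.
case: t => [//|a1 t] /= /(order_path_min (rev_trans le_trans))/allP t_le a.
by rewrite inE => /predU1P[->//|/t_le].
Qed.

Section Spectral.
Local Open Scope sesquilinear_scope.
Variable C : numClosedFieldType.

Lemma trmxC_mul m p q (A : 'M[C]_(m, p)) (B : 'M[C]_(p, q)) :
  (A *m B) ^t* = B ^t* *m A ^t*.
Proof. by rewrite trmx_mul map_mxM. Qed.

Section NormalMatrix.
Variables (n : nat) (M : 'M[C]_n).
Hypothesis normalM : M \is normalmx.
Local Notation P := (spectralmx M).
Local Notation d := (spectral_diag M).

Lemma spectral_mulmxC : P *m P ^t* = 1%:M.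
Proof. exact/unitarymxP/spectral_unitarymx. Qed.

Lemma spectral_mulCmx : P ^t* *m P = 1%:M.
Proof. by rewrite -invmx_unitary ?spectral_unitarymx // mulVmx ?spectral_unit. Qed.

Lemma spectral_decomposition : M = P ^t* *m diag_mx d *m P.
Proof. by rewrite -invmx_unitary ?spectral_unitarymx //; apply/orthomx_spectralP. Qed.

Lemma mulmx_spectralC : M *m P ^t* = P ^t* *m diag_mx d.
Proof. by rewrite {1}spectral_decomposition -!mulmxA spectral_mulmxC mulmx1. Qed.

Lemma spectral_form (u v : 'rV[C]_n) :
  (u *m M *m v ^t*) 0 0 =
  \sum_k d 0 k * ((u *m P ^t*) 0 k * ((v *m P ^t*) 0 k)^*).
Proof.
have -> : u *m M *m v ^t* = (u *m P ^t*) *m diag_mx d *m (v *m P ^t*) ^t*.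
  by rewrite trmxC_mul trmxCK {1}spectral_decomposition !mulmxA.
by rewrite mxE; apply: eq_bigr => k _; rewrite mul_mx_diag !mxE mulrAC mulrC.
Qed.

Lemma spectral_dot (u v : 'rV[C]_n) :
  (u *m v ^t*) 0 0 = \sum_k (u *m P ^t*) 0 k * ((v *m P ^t*) 0 k)^*.
Proof.
have -> : u *m v ^t* = (u *m P ^t*) *m (v *m P ^t*) ^t*.
  by rewrite trmxC_mul trmxCK mulmxA -(mulmxA u) spectral_mulCmx mulmx1.
by rewrite mxE; apply: eq_bigr => k _; rewrite !mxE.
Qed.

Lemma char_poly_spectral : char_poly M = \prod_k ('X - (d 0 k)%:P).
Proof.
by rewrite -char_poly_diag -(char_poly_conj _ spectral_mulCmx) -spectral_decomposition.
Qed.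

Lemma perm_spectral_diag s : char_poly M = \prod_(a <- s) ('X - a%:P) ->
  perm_eq [seq d 0 k | k <- enum 'I_n] s.
Proof.
by move=> cpM; apply: prod_XsubC_eq; rewrite -cpM char_poly_spectral big_map big_enum.
Qed.

Lemma eigenvalue_spectral_diag k : eigenvalue M (d 0 k).
Proof.
rewrite eigenvalue_root_char char_poly_spectral; apply/rootP.
by rewrite horner_prod (bigD1 k) //= hornerXsubC subrr mul0r.
Qed.

Lemma spectral_coord_eigvec a (y : 'rV[C]_n) k : y *m M = a *: y ->
  d 0 k != a -> (y *m P ^t*) 0 k = 0.
Proof.
move=> yM dka; have : (y *m P ^t*) *m diag_mx d = a *: (y *m P ^t*).
  by rewrite -mulmxA -mulmx_spectralC mulmxA yM scalemxAl.
move/matrixP/(_ 0 k); rewrite mul_mx_diag !mxE => /eqP.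
by rewrite mulrC -subr_eq0 -mulrBl mulf_eq0 subr_eq0 (negbTE dka) => /eqP.
Qed.

Lemma spectral_form_le mu (u : 'rV[C]_n) : (forall k, d 0 k <= mu) ->
  (u *m M *m u ^t*) 0 0 <= mu * (u *m u ^t*) 0 0.
Proof.
move=> dmu; rewrite spectral_form spectral_dot mulr_sumr; apply: ler_sum => k _.
by apply: ler_wpM2r; [exact: mul_conjC_ge0 | exact: dmu].
Qed.

Section SimpleEigenvalue.
Variables (a0 : C) (t : seq C).
Hypotheses (cpM : char_poly M = \prod_(a <- a0 :: t) ('X - a%:P)) (a0t : a0 \notin t).

Lemma spectral_diag_other k : d 0 k != a0 -> d 0 k \in t.
Proof.
have : d 0 k \in a0 :: t by rewrite -(perm_mem (perm_spectral_diag cpM)) map_f ?mem_enum.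
by rewrite inE => /predU1P[->|//]; rewrite eqxx.
Qed.

Lemma spectral_diag_simple j k : d 0 j = a0 -> d 0 k = a0 -> j = k.
Proof.
have /card_le1_eqP a0_le1 : leq #|[pred k | d 0 k == a0]| 1.
  rewrite -count_enum -(count_map (d 0) (pred1 a0)) (permP (perm_spectral_diag cpM)) /=.
  by rewrite eqxx (count_memPn a0t).
by move=> dj dk; apply: a0_le1; rewrite inE /= ?dj ?dk.
Qed.

Lemma spectral_coord_orth (y z : 'rV[C]_n) k :
    y != 0 -> y *m M = a0 *: y -> (z *m y ^t*) 0 0 = 0 ->
  d 0 k = a0 -> (z *m P ^t*) 0 k = 0.
Proof.
move=> y0 yM zy dk; set v := y *m P ^t*.
have vj j : j != k -> v 0 j = 0.
  move=> jk; apply: spectral_coord_eigvec yM _; apply: contra jk => /eqP dj.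
  by rewrite (spectral_diag_simple dj dk).
have vk : v 0 k != 0.
  apply: contraNneq y0 => vk0; rewrite -[y]mulmx1 -spectral_mulCmx mulmxA -/v.
  suff -> : v = 0 by rewrite mul0mx.
  by apply/rowP => j; rewrite [RHS]mxE; have [->|/vj] := eqVneq j k.
move: zy; rewrite spectral_dot -/v (bigD1 k) //= big1 ?addr0 => [|j /vj ->].
  by move/eqP; rewrite mulf_eq0 conjC_eq0 (negbTE vk) orbF => /eqP.
by rewrite conjC0 mulr0.
Qed.

Lemma spectral_form_le_orth b (y z : 'rV[C]_n) : {in t, forall a, a <= b} ->
    y != 0 -> y *m M = a0 *: y -> (z *m y ^t*) 0 0 = 0 ->
  (z *m M *m z ^t*) 0 0 <= b * (z *m z ^t*) 0 0.
Proof.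
move=> tb y0 yM zy; rewrite spectral_form spectral_dot mulr_sumr; apply: ler_sum => k _.
have [dk|/spectral_diag_other/tb dkb] := eqVneq (d 0 k) a0.
  by rewrite (spectral_coord_orth y0 yM zy dk) !(mul0r, mulr0).
by apply: ler_wpM2r; [exact: mul_conjC_ge0 | exact: dkb].
Qed.

End SimpleEigenvalue.
End NormalMatrix.

End Spectral.

Section RealForms.
Local Open Scope sesquilinear_scope.
Variable R : rcfType.
Local Notation toC := (real_complex R).

Definition mxform n (A : 'M[R]_n) (u v : 'rV[R]_n) : R := (u *m A *m v^T) 0 0.

Lemma mxform1E n (u v : 'rV[R]_n) : mxform 1%:M u v = \sum_i u 0 i * v 0 i.
Proof. by rewrite /mxform mulmx1 mxE; apply: eq_bigr => i _; rewrite !mxE. Qed.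

Lemma mxformE n (A : 'M[R]_n) u v :
  mxform A u v = \sum_i \sum_j u 0 i * A i j * v 0 j.
Proof.
rewrite /mxform mxE exchange_big; apply: eq_bigr => j _.
by rewrite mxE mulr_suml; apply: eq_bigr => i _; rewrite !mxE.
Qed.

Lemma mxformBl n (A : 'M[R]_n) u1 u2 v :
  mxform A (u1 - u2) v = mxform A u1 v - mxform A u2 v.
Proof. by rewrite /mxform !mulmxBl !mxE. Qed.

Lemma mxformBr n (A : 'M[R]_n) u v1 v2 :
  mxform A u (v1 - v2) = mxform A u v1 - mxform A u v2.
Proof. by rewrite /mxform linearB /= mulmxBr !mxE. Qed.

Lemma mxformZl n (A : 'M[R]_n) c u v : mxform A (c *: u) v = c * mxform A u v.
Proof. by rewrite /mxform -!scalemxAl !mxE. Qed.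

Lemma mxformZr n (A : 'M[R]_n) c u v : mxform A u (c *: v) = c * mxform A u v.
Proof. by rewrite /mxform linearZ /= -scalemxAr !mxE. Qed.

Lemma mxformBM n (A B : 'M[R]_n) u v : mxform (A - B) u v = mxform A u v - mxform B u v.
Proof. by rewrite /mxform mulmxBr mulmxBl !mxE. Qed.

Lemma mxformC n (A : 'M[R]_n) u v : A^T = A -> mxform A u v = mxform A v u.
Proof.
move=> sA; transitivity ((u *m A *m v^T)^T 0 0); first by rewrite mxE.
by rewrite !trmx_mul trmxK sA mulmxA.
Qed.

Lemma mxform_eigl n (A : 'M[R]_n) c u v :
  u *m A = c *: u -> mxform A u v = c * mxform 1%:M u v.
Proof. by move=> uA; rewrite /mxform uA mulmx1 -scalemxAl !mxE. Qed.

Lemma mxform_complex n (A : 'M[R]_n) u v :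
  toC (mxform A u v) = (map_mx toC u *m map_mx toC A *m (map_mx toC v) ^t*) 0 0.
Proof.
have -> : (map_mx toC v) ^t* = map_mx toC v^T.
  by apply/matrixP => i j; rewrite !mxE conj_Creal //; apply/complex_realP; exists (v j i).
by rewrite -!map_mxM [RHS]mxE.
Qed.

Lemma symmx_hermitian n (A : 'M[R]_n) : A^T = A -> map_mx toC A \is hermsymmx.
Proof.
move=> sA; apply: realsym_hermsym.
  apply/is_hermitianmxP; rewrite /= expr0 scale1r; apply/matrixP => i j.
  by rewrite !mxE /= -{1}sA mxE.
by apply/mxOverP => i j; rewrite mxE; apply/complex_realP; exists (A i j).
Qed.

Lemma symmx_form_le_max_eig n (A : 'M[R]_n) mu u : A^T = A ->
    (forall a, eigenvalue A a -> a <= mu) ->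
  mxform A u u <= mu * mxform 1%:M u u.
Proof.
move=> sA Amu; rewrite -lecR rmorphM /= !mxform_complex map_mx1 mulmx1.
have hA := symmx_hermitian sA; apply: (spectral_form_le (hermitian_normalmx hA)) => k.
have /mxOverP/(_ 0 k)/complex_realP[a dk] := hermitian_spectral_diag_real hA.
have := eigenvalue_spectral_diag (hermitian_normalmx hA) k.
by rewrite dk eigenvalue_map lecR => /Amu.
Qed.

Lemma symmx_form_le_orth n (B : 'M[R]_n) a0 t b (y z : 'rV[R]_n) : B^T = B ->
    char_poly B = \prod_(a <- a0 :: t) ('X - a%:P) -> a0 \notin t ->
    {in t, forall a, a <= b} ->
    y != 0 -> y *m B = a0 *: y -> mxform 1%:M z y = 0 ->
  mxform B z z <= b * mxform 1%:M z z.
Proof.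
move=> sB cpB a0t tb y0 yB zy; rewrite -lecR rmorphM /= !mxform_complex map_mx1 mulmx1.
have nB := hermitian_normalmx (symmx_hermitian sB).
apply: (@spectral_form_le_orth _ _ _ nB (toC a0) (map toC t) _ _ _ (map_mx toC y)).
- rewrite -map_char_poly cpB rmorph_prod !big_cons big_map.
  by congr (_ * _); [|apply: eq_bigr => a _]; exact: map_polyXsubC.
- by rewrite mem_map //; exact: complexI.
- by move=> _ /mapP[a ta ->]; rewrite lecR tb.
- by rewrite map_mx_eq0.
- by rewrite -map_mxM yB map_mxZ.
- by move/(congr1 toC): zy; rewrite mxform_complex map_mx1 mulmx1 rmorph0.
Qed.

End RealForms.

Section PerturbationBound.
Variable R : rcfType.

Lemma max_eigenvalue_eq_head n (A : 'M[R]_n) a0 t lam (y : 'rV[R]_n) :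
    char_poly A = \prod_(a <- a0 :: t) ('X - a%:P) -> {in t, forall a, a < a0} ->
    y != 0 -> y *m A = lam *: y -> (forall mu, eigenvalue A mu -> mu <= lam) ->
  lam = a0.
Proof.
move=> cpA t_lt y0 yA lam_max.
have : root (char_poly A) lam by rewrite -eigenvalue_root_char; apply/eigenvalueP; exists y.
rewrite cpA root_prod_XsubC inE => /predU1P[//|/t_lt lam_lt].
have : eigenvalue A a0 by rewrite eigenvalue_root_char cpA root_prod_XsubC mem_head.
by move/lam_max; rewrite leNgt lam_lt.
Qed.

Lemma eigvec_overlap_gap_le n (A B : 'M[R]_n) a0 t b delta lam (x y : 'rV[R]_n) :
    A^T = A -> B^T = B ->
    char_poly B = \prod_(a <- a0 :: t) ('X - a%:P) -> a0 \notin t ->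
    {in t, forall a, a <= b} ->
    (forall u, mxform 1%:M u u = 1 -> `|mxform A u u - mxform B u u| <= delta) ->
    x *m A = lam *: x -> (forall mu, eigenvalue A mu -> mu <= lam) ->
    mxform 1%:M x x = 1 -> y *m B = a0 *: y -> mxform 1%:M y y = 1 ->
  (1 - mxform 1%:M x y ^+ 2) * (a0 - b) <= 2 * delta.
Proof.
move=> sA sB cpB a0t t_le AB_close xA lam_max ux yB uy.
set al := mxform 1%:M x y; set z := x - al *: y.
have y0 : y != 0.
  by apply: contra_eq_neq uy => ->; rewrite /mxform !mul0mx mxE eq_sym oner_neq0.
have yx : mxform 1%:M y x = al by rewrite mxformC ?trmx1.
have Bxy : mxform B x y = a0 * al by rewrite mxformC // (mxform_eigl _ yB) yx.
have Byx : mxform B y x = a0 * al by rewrite (mxform_eigl _ yB) yx.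
have zy : mxform 1%:M z y = 0 by rewrite mxformBl mxformZl uy mulr1 subrr.
have Bz : mxform B z z = mxform B x x - al ^+ 2 * a0.
  rewrite !(mxformBl, mxformBr, mxformZl, mxformZr) Bxy Byx (mxform_eigl _ yB) uy; ring.
have nz : mxform 1%:M z z = 1 - al ^+ 2.
  rewrite !(mxformBl, mxformBr, mxformZl, mxformZr) ux uy yx -/al; ring.
have Bz_le := symmx_form_le_orth sB cpB a0t t_le y0 yB zy.
have Ay_le := symmx_form_le_max_eig y sA lam_max.
have Ax : mxform A x x = lam by rewrite (mxform_eigl _ xA) ux mulr1.
have By : mxform B y y = a0 by rewrite (mxform_eigl _ yB) uy mulr1.
move: (AB_close x ux) (AB_close y uy); rewrite Ax By !ler_norml.
move=> /andP[Ax_lo Ax_hi] /andP[Ay_lo Ay_hi]; rewrite Bz nz in Bz_le; rewrite uy in Ay_le.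
(* lam >= <y, Ay> >= a0 - delta, so a0 - 2 delta <= <x, Bx> <= al^2 a0 + (1 - al^2) b *)
nra.
Qed.

End PerturbationBound.

Lemma card_neq_le_edit_dist n (G H : rel 'I_n) : simple_graph G -> simple_graph H ->
  (#|[set p : 'I_n * 'I_n | G p.1 p.2 != H p.1 p.2]| <= 2 * edit_dist G H)%N.
Proof.
move=> [sG iG] [sH iH].
set D := [set p : 'I_n * 'I_n | G p.1 p.2 != H p.1 p.2].
set Dlt := [set p : 'I_n * 'I_n | (p.1 < p.2)%N && (G p.1 p.2 != H p.1 p.2)].
have D_sub : D \subset Dlt :|: [set (p.2, p.1) | p in Dlt].
  apply/subsetP => -[i j]; rewrite /D /Dlt !inE /= => GHij.
  case: (ltngtP i j) => [ij|ji|/val_inj ij]; first by rewrite GHij.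
    by apply/orP; right; apply/imsetP; exists (j, i); rewrite // inE /= ji sG sH GHij.
  by move: GHij; rewrite ij iG iH.
apply: (leq_trans (subset_leq_card D_sub)); apply: (leq_trans (leq_card_setU _ _)).
by rewrite mul2n -addnn leq_add2l leq_imset_card.
Qed.

Section AdjacencyForms.
Variable R : rcfType.

Lemma adjmx_sym n (G : rel 'I_n) : simple_graph G -> (adjmx R G)^T = adjmx R G.
Proof. by move=> [sG _]; apply/matrixP => i j; rewrite !mxE sG. Qed.

Lemma sqr_form_adjmxB_le n (G H : rel 'I_n) (u : 'rV[R]_n) :
    simple_graph G -> simple_graph H ->
  mxform (adjmx R G - adjmx R H) u u ^+ 2 <=
    2 * (edit_dist G H)%:R * mxform 1%:M u u ^+ 2.
Proof.
move=> gG gH; set E := adjmx R G - adjmx R H.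
have -> : mxform E u u = \sum_(p : 'I_n * 'I_n) E p.1 p.2 * (u 0 p.1 * u 0 p.2).
  by rewrite mxformE pair_bigA /=; apply: eq_bigr => p _; ring.
have -> : mxform 1%:M u u ^+ 2 = \sum_(p : 'I_n * 'I_n) (u 0 p.1 * u 0 p.2) ^+ 2.
  rewrite mxform1E expr2 big_distrlr pair_bigA /=.
  by apply: eq_bigr => p _; ring.
apply: (le_trans (sqr_sum_mul_le _ _)); apply: ler_wpM2r.
  by apply: sumr_ge0 => p _; exact: sqr_ge0.
have -> : \sum_(p : 'I_n * 'I_n) E p.1 p.2 ^+ 2 =
    #|[set p : 'I_n * 'I_n | G p.1 p.2 != H p.1 p.2]|%:R.
  rewrite -sum1_card natr_sum [RHS]big_mkcond /=; apply: eq_bigr => p _.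
  rewrite /E !mxE inE; case: (G _ _); case: (H _ _);
  by rewrite /= ?subrr ?expr0n ?subr0 ?sub0r ?sqrrN ?expr1n.
by rewrite -natrM ler_nat card_neq_le_edit_dist.
Qed.

Lemma adjmx_form_dist_le n (G H : rel 'I_n) e (u : 'rV[R]_n) :
    simple_graph G -> simple_graph H -> (edit_dist G H)%:R <= e ->
    mxform 1%:M u u = 1 ->
  `|mxform (adjmx R G) u u - mxform (adjmx R H) u u| <= 2 * Num.sqrt e.
Proof.
move=> gG gH de uu; have e0 : 0 <= e by apply: le_trans de.
have := sqr_form_adjmxB_le u gG gH; rewrite mxformBM uu expr1n mulr1 => sq_le.
have sqrt_e := sqr_sqrtr e0; have sqrt_e0 := sqrtr_ge0 e.
rewrite ler_norml; apply/andP; split; nra.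
Qed.

End AdjacencyForms.

Lemma unit_vec_mxform (R : rcfType) n (u : 'rV[R]_n) : unit_vec u -> mxform 1%:M u u = 1.
Proof. by rewrite mxform1E => <-; apply: eq_bigr => i _; rewrite expr2. Qed.

Section UnitVectors.
Variables (R : rcfType) (n : nat) (x y : 'rV[R]_n).
Hypotheses (ux : unit_vec x) (uy : unit_vec y).

Lemma sum_sqr_sub_unit : \sum_i (x 0 i - y 0 i) ^+ 2 = 2 - 2 * mxform 1%:M x y.
Proof.
have -> : \sum_i (x 0 i - y 0 i) ^+ 2 =
    \sum_i (x 0 i ^+ 2 + y 0 i ^+ 2 - 2 * (x 0 i * y 0 i)).
  by apply: eq_bigr => i _; ring.
by rewrite sumrB big_split /= -mulr_sumr ux uy mxform1E.
Qed.

Lemma sqr_sum_abs_sqr_sub_le : (forall i, 0 <= x 0 i) -> (forall i, 0 <= y 0 i) ->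
  (\sum_i `|x 0 i ^+ 2 - y 0 i ^+ 2|) ^+ 2 <= 4 * \sum_i (x 0 i - y 0 i) ^+ 2.
Proof.
move=> x0 y0; set S := \sum_i (x 0 i - y 0 i) ^+ 2.
have -> : \sum_i `|x 0 i ^+ 2 - y 0 i ^+ 2| = \sum_i `|x 0 i - y 0 i| * (x 0 i + y 0 i).
  apply: eq_bigr => i _.
  by rewrite subr_sqr normrM (ger0_norm (addr_ge0 (x0 i) (y0 i))).
apply: (le_trans (sqr_sum_mul_le _ _)).
have -> : \sum_i `|x 0 i - y 0 i| ^+ 2 = S.
  by apply: eq_bigr => i _; rewrite real_normK ?num_real.
have -> : \sum_i (x 0 i + y 0 i) ^+ 2 = 2 * (\sum_i x 0 i ^+ 2 + \sum_i y 0 i ^+ 2) - S.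
  transitivity (\sum_i (2 * (x 0 i ^+ 2 + y 0 i ^+ 2) - (x 0 i - y 0 i) ^+ 2)).
    by apply: eq_bigr => i _; ring.
  by rewrite sumrB -mulr_sumr big_split.
rewrite ux uy.
have S0 : 0 <= S by apply: sumr_ge0 => i _; exact: sqr_ge0.
nra.
Qed.

End UnitVectors.

Unset Implicit Arguments.

Theorem lemma2p2 (R : rcfType) (n : nat) (G H : rel 'I_n) (e : R)
  (sH : seq R) (x y : 'rV[R]_n) :
  simple_graph G -> simple_graph H ->
  (edit_dist G H)%:R <= e ->
  spectrum (adjmx R H) sH ->
  sH`_1 < sH`_0 ->
  PF_eigvec (adjmx R G) x -> unit_vec x ->
  PF_eigvec (adjmx R H) y -> unit_vec y ->
  \sum_i (x 0 i - y 0 i) ^+ 2 <= 8 * Num.sqrt e / (sH`_0 - sH`_1) /\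
  \sum_i `|x 0 i ^+ 2 - y 0 i ^+ 2|
    <= 8 * Num.sqrt (Num.sqrt e) / Num.sqrt (sH`_0 - sH`_1).
Proof.
move=> gG gH de [sorted_sH cpH] gap.
move=> [x0 [_ [lx [xA lx_max]]]] ux [y0 [y_nz [ly [yB ly_max]]]] uy.
case: sH sorted_sH cpH gap => [|a0 t] sorted_sH cpH gap; first by rewrite ltxx in gap.
rewrite /= in gap *; set g := a0 - t`_0; have g0 : 0 < g by rewrite subr_gt0.
have t_le := head_ge_sorted (path_sorted sorted_sH).
have t_lt a : a \in t -> a < a0 by move/t_le/le_lt_trans; apply.
have a0t : a0 \notin t by apply/negP => /t_lt; rewrite ltxx.
have ly_a0 := max_eigenvalue_eq_head cpH t_lt y_nz yB ly_max; subst ly.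
have := eigvec_overlap_gap_le (adjmx_sym R gG) (adjmx_sym R gH) cpH a0t t_le
  (fun u => adjmx_form_dist_le gG gH de) xA lx_max (unit_vec_mxform ux)
  yB (unit_vec_mxform uy).
rewrite -/g; set al := mxform 1%:M x y => overlap.
have al0 : 0 <= al by rewrite /al mxform1E; apply: sumr_ge0 => i _; rewrite mulr_ge0.
set S := \sum_i (x 0 i - y 0 i) ^+ 2.
have S_al : S = 2 - 2 * al by exact: sum_sqr_sub_unit.
have S0 : 0 <= S by apply: sumr_ge0 => i _; exact: sqr_ge0.
have sqrt_e0 : 0 <= Num.sqrt e := sqrtr_ge0 e.
(* S >= 0 forces al <= 1, and then 2 - 2 al <= 2 (1 - al^2) *)
have S_le : S <= 8 * Num.sqrt e / g.
  by rewrite ler_pdivlMr // S_al; nra.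
split=> //; have := sqr_sum_abs_sqr_sub_le ux uy x0 y0; rewrite -/S => T_le.
rewrite -(ler_pXn2r (_ : 0 < 2)%N) ?nnegrE ?sumr_ge0 ?divr_ge0 ?mulr_ge0 ?sqrtr_ge0 //.
rewrite expr_div_n exprMn !sqr_sqrtr ?(ltW g0) //.
apply: le_trans T_le _; rewrite -!mulrA in S_le *; lra.
Qed.
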